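(* Let $F$ be a sensori-computational device, and let $R_1$ and $R_2$ be relations between sets of strings. If there exists a sensori-computational device $F_1$ such that $F_1$ output simulates $F$ modulo $R_1$, and there exists a sensori-computational device $F_2$ such that $F_2$ output simulates $F_1$ modulo $R_2$, then $F_2$ output simulates $F$ modulo the composite relation $R_1 ; R_2$.
   Context: A sensori-computational device is a 6-tuple $F=(V,V_0,Y,\tau,C,c)$ where $V$ is a non-empty finite set of states, $V_0\subseteq V$ is a non-empty set of initial states, $Y$ (also written $Y(F)$) is a finite set of observations, $\tau:V\times V\to\mathcal{P}(Y)$ is the transition function, $C$ is a set of outputs, and $c:V\to\mathcal{P}(C)\setminus\{\emptyset\}$ is the output function. For a string $s=y_1\cdots y_n\in Y^*$ and states $v,w$, $w$ is reached by $s$ from $v$ if there are states $w_0=v,w_1,\dots,w_n=w$ with $y_i\in\tau(w_{i-1},w_i)$ for all $i$. Let $\mathcal{R}_F(s)$ be the set of states reached by $s$ from some initial state. The language of $F$ is $\mathcal{L}(F)=\{s\in Y^*:\mathcal{R}_F(s)\neq\emptyset\}$, and $\mathcal{C}_F(s)=\bigcup_{v\in\mathcal{R}_F(s)}c(v)$. Given a relation $R\subseteq A\times B$ between sets of strings, a device $F'$ output simulates $F$ modulo $R$ if for every $s\in\mathcal{L}(F)$: (1) there exists $t\in\mathcal{L}(F')$ with $s\,R\,t$; and (2) for every $t\in B$ with $s\,R\,t$, we have $t\in\mathcal{L}(F')$ and $\mathcal{C}_F(s)\supseteq\mathcal{C}_{F'}(t)$. Relation composition is $R_1;R_2=\{(u,v):\exists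 r\ (u,r)\in R_1,\ (r,v)\in R_2\}$. *)

From mathcomp Require Import all_boot.
Set Implicit Arguments.
Unset Strict Implicit.
Unset Printing Implicit Defensive.

(* A sensori-computational device F = (V, V0, Y, tau, C, c).
   Observations Y : finType and outputs C : Type are parameters; subsets are
   Prop-valued predicates. *)
Record device (Y : finType) (C : Type) := Device {
  dV : finType;
  dV_ne : exists v : dV, True;
  dV0 : dV -> Prop;
  dV0_ne : exists v, dV0 v;
  dtau : dV -> dV -> Y -> Prop;
  dc : dV -> C -> Prop;
  dc_ne : forall v, exists o, dc v o
}.

Section DeviceDefs.
Variables (Y : finType) (C : Type) (F : device Y C).

Fixpoint reaches (v : dV F) (s : seq Y) (w : dV F) : Prop :=
  match s with
  | [::] => w = v
  | y :: s' => exists u, @dtau _ _ F v u y /\ reaches u s' w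
  end.

Definition reached (s : seq Y) (w : dV F) : Prop :=
  exists v0, @dV0 _ _ F v0 /\ reaches v0 s w.

Definition in_lang (s : seq Y) : Prop := exists w, reached s w.

Definition outputs (s : seq Y) (o : C) : Prop :=
  exists2 w, reached s w & @dc _ _ F w o.
End DeviceDefs.

Definition output_simulates (Y Y' : finType) (C : Type)
    (F' : device Y' C) (F : device Y C) (R : seq Y -> seq Y' -> Prop) : Prop :=
  forall s, in_lang F s ->
    (exists t, R s t /\ in_lang F' t) /\
    (forall t, R s t -> in_lang F' t /\ (forall o, outputs F' t o -> outputs F s o)).

Definition rel_comp (A B D : Type) (R1 : A -> B -> Prop) (R2 : B -> D -> Prop)
    : A -> D -> Prop :=
  fun u v => exists r, R1 u r /\ R2 r v.

From mathcomp Require Import all_boot.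

Set Implicit Arguments.

Section OutputSimulation.
Variables (Y Y' : finType) (C : Type) (F : device Y C) (F' : device Y' C).
Variable R : seq Y -> seq Y' -> Prop.
Hypothesis simF : output_simulates F' F R.

Lemma output_simulates_ex_related [s] :
  in_lang F s -> exists t, R s t /\ in_lang F' t.
Proof. by case/simF. Qed.

Lemma output_simulates_in_lang [s t] :
  in_lang F s -> R s t -> in_lang F' t.
Proof. by move=> /simF[_ sim_t] /sim_t[]. Qed.

Lemma output_simulates_outputs [s t o] :
  in_lang F s -> R s t -> outputs F' t o -> outputs F s o.
Proof. by move=> /simF[_ sim_t] /sim_t[_]; apply. Qed.

End OutputSimulation.

Theorem theorem1 (Y Y1 Y2 : finType) (C : Type) (F : device Y C)
    (R1 : seq Y -> seq Y1 -> Prop) (R2 : seq Y1 -> seq Y2 -> Prop)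
    (F1 : device Y1 C) (F2 : device Y2 C) :
  output_simulates F1 F R1 -> output_simulates F2 F1 R2 ->
  output_simulates F2 F (rel_comp R1 R2).
Proof.
move=> sim1 sim2 s Ls; split.
  have [r [R1sr Lr]] := output_simulates_ex_related sim1 Ls.
  have [t [R2rt Lt]] := output_simulates_ex_related sim2 Lr.
  by exists t; split => //; exists r.
move=> t [r [R1sr R2rt]].
have Lr := output_simulates_in_lang sim1 Ls R1sr.
split; first exact: (output_simulates_in_lang sim2 Lr R2rt).
move=> o /(output_simulates_outputs sim2 Lr R2rt).
exact: (output_simulates_outputs sim1 Ls R1sr).
Qed.
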